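(* There exists a Heffter array $H(n;k)$ for all $n\equiv 1\pmod 4$ and $k\equiv 1\pmod 4$ with $5\le k<n$.
   Context: A Heffter array $H(n;k)$ is an $n\times n$ array in which some cells are filled with nonzero integers and the others are empty, such that: each row and each column contains exactly $k$ filled cells; the entries of every row and of every column sum to $0$ modulo $2nk+1$; and for each integer $1\le x\le nk$, exactly one of $x$ or $-x$ appears in the array, and it appears exactly once. *)

From HB Require Import structures.
From mathcomp Require Import all_boot all_order all_algebra.
Set Implicit Arguments. Unset Strict Implicit. Unset Printing Implicit Defensive.
Import Order.TTheory GRing.Theory Num.Theory.
Local Open Scope ring_scope.

(* An n x n partially filled array of integers: None = empty cell. *)
Definition parray (n : nat) := 'I_n -> 'I_n -> option int.

Definition entry (n : nat) (A : parray n) (i j : 'I_n) : int :=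
  if A i j is Some v then v else 0.

Definition is_heffter (n k : nat) (A : parray n) : Prop :=
  (forall i j v, A i j = Some v -> v != 0) /\
  (forall i : 'I_n, #|[set j : 'I_n | A i j != None]| = k) /\
  (forall j : 'I_n, #|[set i : 'I_n | A i j != None]| = k) /\
  (forall i : 'I_n, (((2 * n * k).+1)%:Z %| \sum_(j < n) entry A i j)%Z) /\
  (forall j : 'I_n, (((2 * n * k).+1)%:Z %| \sum_(i < n) entry A i j)%Z) /\
  (forall x : nat, (1 <= x <= n * k)%N ->
     #|[set p : 'I_n * 'I_n | (A p.1 p.2 == Some (x%:Z)) || (A p.1 p.2 == Some (- x%:Z))]| = 1%N).

Definition heffter_exists (n k : nat) : Prop := exists A : parray n, is_heffter k A.

(* Write n = 2h + 1 and k = 4m + 5.  The array is cyclic: cell (i, j) lies on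
   the diagonal d = j - i (mod n), and it is filled iff d is one of k chosen
   diagonals.  Each chosen diagonal d owns a block of n consecutive absolute
   values b(d) n + 1, ..., b(d) n + n, which its n cells run through once, and
   b is injective on the chosen diagonals; so every value 1, ..., nk occurs
   exactly once, up to sign.  Apart from the five diagonals 0, h - 1, h, h + 1
   and 2h, the chosen diagonals come in quadruples 2r + 1, 2r + 2, h + 2r + 2,
   h + 2r + 3 carrying the blocks 4r + 1, ..., 4r + 4 with signs +, -, -, +;
   along any row or column the two pairs of entries of a quadruple share their
   offsets inside the blocks, so they cancel.  The five remaining diagonals
   contribute 0 or +-(2nk + 1) to every row and column. *)

From HB Require Import structures.
From mathcomp Require Import all_boot all_order all_algebra.
From mathcomp Require Import zify.
Set Implicit Arguments.
Unset Strict Implicit.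
Unset Printing Implicit Defensive.
Import GRing.Theory.

Ltac decide_ifs :=
  repeat (match goal with
  | |- context [if ?c then _ else _] =>
    lazymatch c with
    | true => fail | false => fail
    | context [if _ then _ else _] => fail
    | _ => first [ rewrite (_ : c = true); last by lia
                 | rewrite (_ : c = false); last by lia
                 | let E := fresh "E" in case E: c ]
    end
  end; cbv iota).

Ltac case_ors H := repeat case/orP: H => H.

Section BigReindex.
Context {R : Type} {idx : R} (op : Monoid.com_law idx).

Lemma big_ord_perm_nat n (s : nat -> nat) (f : nat -> R) :
  (forall i, i < n -> s i < n) ->
  {in gtn n &, injective s} ->
  \big[op/idx]_(i < n) f (s i) = \big[op/idx]_(i < n) f i.
Proof.
move=> s_lt s_inj.
pose s' (i : 'I_n) : 'I_n := Ordinal (s_lt i (ltn_ord i)).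
have inj_s' : injective s'.
  by move=> i j /(congr1 val) /s_inj eq_ij; apply/val_inj/eq_ij; rewrite inE.
by rewrite [RHS](reindex_inj inj_s').
Qed.

Lemma big_ord_mem n (s : seq nat) (f : nat -> R) :
  uniq s -> all (gtn n) s ->
  \big[op/idx]_(i < n | (i : nat) \in s) f i = \big[op/idx]_(i <- s) f i.
Proof.
move=> s_uniq /allP s_lt.
rewrite -big_mkord -big_filter; apply: perm_big.
apply: uniq_perm; rewrite ?filter_uniq ?iota_uniq // => i.
rewrite mem_filter; apply/andP/idP => [[]//|s_i].
by rewrite mem_index_iota; split=> //; exact: s_lt.
Qed.

Lemma big_iota_pairs a p (g : nat -> R) :
  \big[op/idx]_(i <- iota a (2 * p)) g i =
  \big[op/idx]_(r < p) op (g (a + 2 * r)) (g (a + 2 * r + 1)).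
Proof.
elim: p => [|p IHp]; first by rewrite muln0 big_nil big_ord0.
have -> : 2 * p.+1 = 2 * p + 2 by rewrite mulnS addnC.
rewrite big_ord_recr /= -IHp iotaD big_cat /= !big_cons big_nil.
by rewrite Monoid.mulm1 addn1.
Qed.

End BigReindex.

Section CyclicArray.
Variable N : nat.

Definition diag_index (i j : nat) : nat := (j + N - i) %% N.

Lemma diag_indexE i j :
  i < N -> j < N -> diag_index i j = if i <= j then j - i else j + N - i.
Proof.
rewrite /diag_index => lt_iN lt_jN; case: leqP => [le_ij|lt_ji].
  by rewrite addnC -addnBA // modnDl modn_small //; lia.
by rewrite modn_small //; lia.
Qed.

Lemma diag_index_lt i j : 0 < N -> diag_index i j < N.
Proof. exact: ltn_pmod. Qed.

Lemma diag_index_inj i j j' :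
  i < N -> j < N -> j' < N -> diag_index i j = diag_index i j' -> j = j'.
Proof.
by move=> lt_iN lt_jN lt_j'N; rewrite !diag_indexE //; case: ifP; case: ifP; lia.
Qed.

Lemma diag_indexK d j : d < N -> j < N -> diag_index (diag_index d j) j = d.
Proof.
move=> lt_dN lt_jN; have lt_eN : diag_index d j < N by apply: diag_index_lt; lia.
rewrite (diag_indexE lt_eN lt_jN) (diag_indexE lt_dN lt_jN).
by case: ifP; case: ifP; lia.
Qed.

Section BigDiag.
Context {R : Type} {idx : R} (op : Monoid.com_law idx).

Lemma big_diag_row i (g : nat -> R) :
  i < N -> \big[op/idx]_(j < N) g (diag_index i j) = \big[op/idx]_(d < N) g d.
Proof.
move=> lt_iN; apply: big_ord_perm_nat => [j lt_jN|j j' lt_jN lt_j'N].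
  by apply: diag_index_lt; lia.
exact: diag_index_inj.
Qed.

Lemma big_diag_col j (g : nat -> nat -> R) :
  j < N ->
  \big[op/idx]_(i < N) g (diag_index i j) i =
  \big[op/idx]_(d < N) g d (diag_index d j).
Proof.
move=> lt_jN.
rewrite -(@big_ord_perm_nat _ _ op N (diag_index ^~ j) (fun i => g (diag_index i j) i)).
- by apply: eq_bigr => d _; rewrite diag_indexK.
- by move=> d lt_dN; apply: diag_index_lt; lia.
move=> d d' lt_dN lt_d'N /(congr1 (diag_index ^~ j)) /=.
by rewrite !diag_indexK.
Qed.

End BigDiag.

Variables (P : pred nat) (F : nat -> nat -> int).

Definition cyclic_array : parray N :=
  fun i j => if P (diag_index i j) then Some (F (diag_index i j) i) else None.

Lemma entry_cyclic_array i j :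
  entry cyclic_array i j = if P (diag_index i j) then F (diag_index i j) i else 0%R.
Proof. by rewrite /entry /cyclic_array; case: ifP. Qed.

Lemma cyclic_array_row_sum (i : 'I_N) :
  (\sum_(j < N) entry cyclic_array i j = \sum_(d < N | P d) F d i)%R.
Proof.
rewrite [RHS]big_mkcond.
rewrite -(@big_diag_row _ _ +%R i (fun d => if P d then F d i else 0%R)) //.
by apply: eq_bigr => j _; rewrite entry_cyclic_array.
Qed.

Lemma cyclic_array_col_sum (j : 'I_N) :
  (\sum_(i < N) entry cyclic_array i j = \sum_(d < N | P d) F d (diag_index d j))%R.
Proof.
rewrite [RHS]big_mkcond.
rewrite -(@big_diag_col _ _ +%R j (fun d i => if P d then F d i else 0%R)) //.
by apply: eq_bigr => i _; rewrite entry_cyclic_array.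
Qed.

Lemma cyclic_array_row_card (i : 'I_N) :
  #|[set j | cyclic_array i j != None]| = \sum_(d < N | P d) 1.
Proof.
rewrite -sum1_card big_mkcond [RHS]big_mkcond.
rewrite -(@big_diag_row _ _ addn i (fun d => if P d then 1 else 0)) //.
by apply: eq_bigr => j _; rewrite inE /cyclic_array; case: (P _).
Qed.

Lemma cyclic_array_col_card (j : 'I_N) :
  #|[set i | cyclic_array i j != None]| = \sum_(d < N | P d) 1.
Proof.
rewrite -sum1_card big_mkcond [RHS]big_mkcond.
rewrite -(@big_diag_col _ _ addn j (fun d _ => if P d then 1 else 0)) //.
by apply: eq_bigr => i _; rewrite inE /cyclic_array; case: (P _).
Qed.

End CyclicArray.

Lemma card_filled_cells n (A : parray n) :
  #|[set p : 'I_n * 'I_n | A p.1 p.2 != None]| =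
  \sum_(i < n) #|[set j | A i j != None]|.
Proof.
rewrite -sum1_card big_mkcond /=.
under [RHS]eq_bigr => i _ do rewrite -sum1_card big_mkcond /=.
by rewrite pair_big /=; apply: eq_bigr => p _; rewrite !inE.
Qed.

Lemma card_inj_fiber (T : finType) (S : {set T}) (phi : T -> nat) (K x : nat) :
  #|S| = K -> {in S &, injective phi} -> {in S, forall p, 0 < phi p <= K} ->
  0 < x <= K -> #|[set p in S | phi p == x]| = 1.
Proof.
move=> card_S phi_inj phi_range x_range.
set s := [seq phi p | p <- enum S].
have s_uniq : uniq s.
  by rewrite map_inj_in_uniq ?enum_uniq // => p q; rewrite !mem_enum; apply: phi_inj.
have s_sub : {subset s <= iota 1 K}.
  move=> y /mapP [p]; rewrite mem_enum mem_iota => /phi_range + ->; lia.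
have s_size : size (iota 1 K) <= size s by rewrite size_iota size_map -cardE card_S.
have [_ s_eq] := uniq_min_size s_uniq s_sub s_size.
have /mapP [p] : x \in s by rewrite s_eq mem_iota; lia.
rewrite mem_enum => S_p ->.
rewrite (_ : [set q in S | phi q == phi p] = [set p]) ?cards1 //.
apply/setP => q; rewrite !inE.
by apply/andP/eqP => [[S_q /eqP /phi_inj] | ->]; [apply | rewrite S_p eqxx].
Qed.

Definition signed (neg : bool) (a : nat) : int := if neg then (- Posz a)%R else Posz a.

Lemma signed_eq_pm neg a x :
  (signed neg a == Posz x) || (signed neg a == (- Posz x)%R) = (a == x).
Proof. by case: neg; rewrite /signed; apply/idP/idP; lia. Qed.

Lemma signed_eq0 neg a : (signed neg a == 0%R) = (a == 0).
Proof. by case: neg; rewrite /signed; apply/idP/idP; lia. Qed.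

Lemma eq_mulnD_small n x y p q :
  p < n -> q < n -> x * n + p = y * n + q -> x = y /\ p = q.
Proof.
move=> lt_pn lt_qn eq_xy; have n_gt0 : 0 < n by lia.
have := congr1 (modn^~ n) eq_xy; have := congr1 (divn^~ n) eq_xy => /=.
by rewrite !divnMDl // !modnMDl !divn_small // !modn_small // !addn0.
Qed.

Section Construction.
Variables h m : nat.
Hypothesis le_mh : 2 * m + 2 <= h.

Local Notation N := (2 * h + 1).

Definition special_diags : seq nat := [:: 0; h - 1; h; h + 1; 2 * h].

Definition quad_diags r : seq nat := [:: 2 * r + 1; 2 * r + 2; h + 2 * r + 2; h + 2 * r + 3].

Definition filled_diags : seq nat :=
  special_diags ++ iota 1 (2 * m) ++ iota (h + 2) (2 * m).

Lemma mem_filled_diags d :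
  (d \in filled_diags) =
  [|| d == 0, d == h - 1, d == h, d == h + 1, d == 2 * h,
      0 < d <= 2 * m | h + 2 <= d < h + 2 * m + 2].
Proof. by rewrite !mem_cat !inE !mem_iota; apply/idP/idP; lia. Qed.

Lemma filled_diags_uniq : uniq filled_diags.
Proof.
rewrite !cat_uniq !iota_uniq /= !inE !andbT; apply/and3P; split; first by lia.
  by apply/hasPn => d; rewrite mem_cat !mem_iota !inE; lia.
by apply/hasPn => d; rewrite !mem_iota; lia.
Qed.

Lemma filled_diags_lt : all (gtn N) filled_diags.
Proof. by apply/allP => d; rewrite mem_filled_diags /=; lia. Qed.

Lemma size_filled_diags : size filled_diags = 4 * m + 5.
Proof. by rewrite !size_cat !size_iota /=; lia. Qed.

Lemma sum_filled_diags (g : nat -> int) :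
  (\sum_(d <- filled_diags) g d =
   \sum_(d <- special_diags) g d + \sum_(r < m) \sum_(d <- quad_diags r) g d)%R.
Proof.
rewrite !big_cat !big_iota_pairs /= -big_split; congr (_ + _)%R.
apply: eq_bigr => r _; rewrite !big_cons big_nil /= addr0 !addrA.
by congr (g _ + g _ + g _ + g _)%R; lia.
Qed.

Definition diag_block d : nat :=
  if d == 0 then 4 * m + 1
  else if d == h - 1 then 4 * m + 2
  else if d == h then 4 * m + 4
  else if d == h + 1 then 4 * m + 3
  else if d == 2 * h then 0
  else if d <= 2 * m then 2 * d - (if odd d then 1 else 2)
  else 2 * (d - h) - (if odd (d - h) then 2 else 1).

Definition diag_offset d i : nat :=
  if d == 0 then (if i < h then 2 * i + 2 else if i < 2 * h then 2 * i + 1 - 2 * h else 0)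
  else if d == h then (if i < h then 2 * h - 1 - 2 * i else 2 * i - 2 * h)
  else if d == h + 1 then (if i < 2 * h then i + 1 else 0)
  else if d == 2 * h then (if i < h then 2 * h - 1 - 2 * i else 4 * h - 2 * i)
  else if d <= 2 * m then (if i <= h then i + h else i - h - 1)
  else i.

Definition diag_neg d i : bool :=
  if d == 0 then true
  else if d == h then i < h
  else if d <= 2 * m then ~~ odd d
  else if h + 2 <= d < h + 2 * m + 2 then ~~ odd (d - h)
  else false.

Definition cell_abs d i : nat := diag_block d * N + diag_offset d i + 1.

Definition diag_value d i : int := signed (diag_neg d i) (cell_abs d i).

Local Notation M := (2 * N * (4 * m + 5)).+1.

Lemma special_row_sum i :
  i < N ->
  (Posz M %| (\sum_(d <- special_diags) diag_value d i)%R)%Z.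
Proof.
move=> lt_iN; set s := (\sum_(d <- _) _)%R.
suff : s = 0%R \/ s = Posz M by case=> ->; [exact: dvdz0 | exact: dvdzz].
rewrite /s !big_cons big_nil /= /diag_value /signed /cell_abs /diag_block /diag_offset /diag_neg.
decide_ifs; lia.
Qed.

Lemma special_col_sum j :
  j < N ->
  (Posz M %| (\sum_(d <- special_diags) diag_value d (diag_index N d j))%R)%Z.
Proof.
move=> lt_jN; set s := (\sum_(d <- _) _)%R.
suff : s = 0%R \/ s = Posz M \/ s = (- Posz M)%R.
  by case=> [|[]] ->; rewrite ?dvdz0 ?dvdzz // -mulN1r dvdz_mull ?dvdzz.
rewrite /s !big_cons big_nil /= !diag_indexE //; try lia.
rewrite /diag_value /signed /cell_abs /diag_block /diag_offset /diag_neg.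
decide_ifs; lia.
Qed.

Lemma diag_block_quad r :
  r < m ->
  [/\ diag_block (2 * r + 1) = 4 * r + 1, diag_block (2 * r + 2) = 4 * r + 2,
      diag_block (h + 2 * r + 2) = 4 * r + 3 & diag_block (h + 2 * r + 3) = 4 * r + 4].
Proof. by move=> lt_rm; rewrite /diag_block; decide_ifs; split; lia. Qed.

Lemma quad_row_sum r i :
  r < m -> i < N -> (\sum_(d <- quad_diags r) diag_value d i = 0)%R.
Proof.
move=> lt_rm lt_iN; rewrite !big_cons big_nil /= /diag_value /cell_abs.
have [-> -> -> ->] := diag_block_quad lt_rm.
rewrite /signed /diag_offset /diag_neg; decide_ifs; lia.
Qed.

Lemma quad_col_sum r j :
  r < m -> j < N -> (\sum_(d <- quad_diags r) diag_value d (diag_index N d j) = 0)%R.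
Proof.
move=> lt_rm lt_jN; rewrite !big_cons big_nil /= !diag_indexE //; try lia.
rewrite /diag_value /cell_abs; have [-> -> -> ->] := diag_block_quad lt_rm.
rewrite /signed /diag_offset /diag_neg; decide_ifs; lia.
Qed.

Lemma diag_offset_lt d i : i < N -> diag_offset d i < N.
Proof. by move=> lt_iN; rewrite /diag_offset; decide_ifs; lia. Qed.

Lemma diag_offset_inj d i i' :
  i < N -> i' < N -> diag_offset d i = diag_offset d i' -> i = i'.
Proof. by move=> lt_iN lt_i'N; rewrite /diag_offset; decide_ifs; lia. Qed.

Lemma diag_block_le d : d \in filled_diags -> diag_block d <= 4 * m + 4.
Proof.
by rewrite mem_filled_diags => O_d; case_ors O_d; rewrite /diag_block; decide_ifs; lia.
Qed.

Definition block_diag b : nat :=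
  if b == 0 then 2 * h
  else if b <= 4 * m then (b + 2) %/ 2 + (if (b - 1) %% 4 < 2 then 0 else h)
  else if b == 4 * m + 1 then 0
  else if b == 4 * m + 2 then h - 1
  else if b == 4 * m + 3 then h + 1
  else h.

Lemma diag_blockK : {in filled_diags, cancel diag_block block_diag}.
Proof.
move=> d; rewrite mem_filled_diags => O_d; case_ors O_d;
  by rewrite /diag_block /block_diag; decide_ifs; lia.
Qed.

Lemma cell_abs_inj d d' i i' :
  d \in filled_diags -> d' \in filled_diags -> i < N -> i' < N ->
  cell_abs d i = cell_abs d' i' -> d = d' /\ i = i'.
Proof.
move=> O_d O_d' lt_iN lt_i'N /addIn eq_abs.
have [eq_block eq_offset] :=
  eq_mulnD_small (diag_offset_lt d lt_iN) (diag_offset_lt d' lt_i'N) eq_abs.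
have eq_dd' := can_in_inj diag_blockK O_d O_d' eq_block; subst d'.
by split; last exact: diag_offset_inj eq_offset.
Qed.

Lemma cell_abs_range d i :
  d \in filled_diags -> i < N -> 0 < cell_abs d i <= N * (4 * m + 5).
Proof.
move=> O_d lt_iN; have := diag_offset_lt d lt_iN.
have := leq_mul (diag_block_le O_d) (leqnn N); rewrite /cell_abs; lia.
Qed.

Definition heffter_array : parray N :=
  @cyclic_array N (fun d => d \in filled_diags) diag_value.

Lemma heffter_array_row_card (i : 'I_N) :
  #|[set j | heffter_array i j != None]| = 4 * m + 5.
Proof.
by rewrite cyclic_array_row_card /= (big_ord_mem addn (fun=> 1)) ?filled_diags_uniq
  ?filled_diags_lt // sum1_size size_filled_diags.
Qed.

Lemma heffter_array_col_card (j : 'I_N) :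
  #|[set i | heffter_array i j != None]| = 4 * m + 5.
Proof.
by rewrite cyclic_array_col_card /= (big_ord_mem addn (fun=> 1)) ?filled_diags_uniq
  ?filled_diags_lt // sum1_size size_filled_diags.
Qed.

Lemma heffter_array_row_sum (i : 'I_N) :
  (Posz M %| (\sum_(j < N) entry heffter_array i j)%R)%Z.
Proof.
rewrite cyclic_array_row_sum /= (big_ord_mem +%R (diag_value^~ i))
  ?filled_diags_uniq ?filled_diags_lt //.
rewrite sum_filled_diags [X in (_ + X)%R]big1 ?addr0 => [|r _].
  exact: special_row_sum.
exact: quad_row_sum (ltn_ord r) (ltn_ord i).
Qed.

Lemma heffter_array_col_sum (j : 'I_N) :
  (Posz M %| (\sum_(i < N) entry heffter_array i j)%R)%Z.
Proof.
rewrite cyclic_array_col_sum /= (big_ord_mem +%R (fun d => diag_value d (diag_index N d j)))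
  ?filled_diags_uniq ?filled_diags_lt //.
rewrite sum_filled_diags [X in (_ + X)%R]big1 ?addr0 => [|r _].
  exact: special_col_sum.
exact: quad_col_sum (ltn_ord r) (ltn_ord j).
Qed.

Lemma heffter_array_neq0 (i j : 'I_N) v : heffter_array i j = Some v -> v != 0%R.
Proof.
rewrite /heffter_array /cyclic_array; case: ifP => // O_d [<-].
by rewrite /diag_value signed_eq0 -lt0n; case/andP: (cell_abs_range O_d (ltn_ord i)).
Qed.

Lemma heffter_array_values x :
  0 < x <= N * (4 * m + 5) ->
  #|[set p : 'I_N * 'I_N | (heffter_array p.1 p.2 == Some (Posz x))
                           || (heffter_array p.1 p.2 == Some (- Posz x)%R)]| = 1.
Proof.
move=> x_range.
set S := [set p : 'I_N * 'I_N | heffter_array p.1 p.2 != None].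
pose abs_at (p : 'I_N * 'I_N) := cell_abs (diag_index N p.1 p.2) p.1.
rewrite (_ : [set p | _] = [set p in S | abs_at p == x]); last first.
  apply/setP => p; rewrite !inE /heffter_array /cyclic_array /abs_at.
  by case: ifP => //= _; rewrite signed_eq_pm.
apply: card_inj_fiber x_range.
- rewrite card_filled_cells (eq_bigr _ (fun i _ => heffter_array_row_card i)).
  by rewrite sum_nat_const card_ord.
- move=> [i j] [i' j']; rewrite !inE /heffter_array /cyclic_array /abs_at /=.
  case: ifP => // O_d _; case: ifP => // O_d' _.
  move/(cell_abs_inj O_d O_d' (ltn_ord i) (ltn_ord i')) => [+ /val_inj eq_ii'].
  by subst i' => /(diag_index_inj (ltn_ord i) (ltn_ord j) (ltn_ord j')) /val_inj ->.
- move=> [i j]; rewrite inE /heffter_array /cyclic_array /abs_at /=.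
  by case: ifP => // O_d _; apply: cell_abs_range.
Qed.

Lemma heffter_array_is_heffter : is_heffter (4 * m + 5) heffter_array.
Proof.
do !split.
- exact: heffter_array_neq0.
- exact: heffter_array_row_card.
- exact: heffter_array_col_card.
- exact: heffter_array_row_sum.
- exact: heffter_array_col_sum.
- by move=> x; apply: heffter_array_values.
Qed.

End Construction.

Lemma heffter_exists_cyclic h m :
  2 * m + 2 <= h -> heffter_exists (2 * h + 1) (4 * m + 5).
Proof. by move=> le_mh; exists (@heffter_array h m); apply: heffter_array_is_heffter. Qed.

Theorem theorem6p2 (n k : nat) :
  n %% 4 = 1 -> k %% 4 = 1 -> 5 <= k -> k < n -> heffter_exists n k.
Proof.
move=> n_mod4 k_mod4 k_ge5 lt_kn.
have -> : n = 2 * (2 * (n %/ 4)) + 1 by lia.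
have -> : k = 4 * (k %/ 4 - 1) + 5 by lia.
by apply: heffter_exists_cyclic; lia.
Qed.
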